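(* Let $\widehat{A}=A+\epsilon B$ and $\widehat{C}=C+\epsilon D$ with $A,B,C,D\in\mathbb{R}^{n\times n}$ be such that the dual group generalized inverses of $\widehat{A}$, $\widehat{C}$ and $\widehat{A}\widehat{C}$ exist and have the particular form $\widehat{A}^{\#}=A^{\#}-\epsilon A^{\#}BA^{\#}$, $\widehat{C}^{\#}=C^{\#}-\epsilon C^{\#}DC^{\#}$, $(\widehat{A}\widehat{C})^{\#}=(AC)^{\#}-\epsilon (AC)^{\#}(AD+BC)(AC)^{\#}$. If $AC=CA$, $C^{\#}B=BC^{\#}$ and $A^{\#}D=DA^{\#}$, then $(\widehat{A}\widehat{C})^{\#}=\widehat{A}^{\#}\widehat{C}^{\#}=\widehat{C}^{\#}\widehat{A}^{\#}$.
   Context: A dual number is $a+\epsilon b$ with $a,b\in\mathbb{R}$, where $\epsilon\neq 0$, $\epsilon^2=0$ and $\epsilon$ commutes with reals. A dual matrix is $A+\epsilon B$ with $A,B$ real; sums and products are computed formally using $\epsilon^2=0$ (so $(A+\epsilon B)(C+\epsilon D)=AC+\epsilon(AD+BC)$), and equality means equality of real and dual parts. For a real square matrix $A$, $A^{\#}$ denotes its group inverse. For a square dual matrix $\widehat{A}$ of dual index $1$ (i.e., $R(\widehat{A})=R(\widehat{A}^2)$ over dual vectors), its dual group generalized inverse (DGGI) $\widehat{A}^{\#}$ is the unique dual matrix $\widehat{X}$ (if it exists) with $\widehat{A}\widehat{X}\widehat{A}=\widehat{A}$, $\widehat{X}\widehat{A}\widehat{X}=\widehat{X}$, $\widehat{A}\widehat{X}=\widehat{X}\widehat{A}$.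 *)

From HB Require Import structures.
From mathcomp Require Import all_boot all_order all_algebra.
Set Implicit Arguments. Unset Strict Implicit. Unset Printing Implicit Defensive.
Import Order.TTheory GRing.Theory Num.Theory.
Local Open Scope ring_scope.

(* A dual matrix A + eps B is represented by the pair (A, B) of real matrices. *)
Definition dualmx (R : realFieldType) (n : nat) : Type := ('M[R]_n * 'M[R]_n)%type.

Definition dmk (R : realFieldType) (n : nat) (A B : 'M[R]_n) : dualmx R n := (A, B).

(* (A + eps B)(C + eps D) = AC + eps (AD + BC) *)
Definition dmul (R : realFieldType) (n : nat) (P Q : dualmx R n) : dualmx R n :=
  (P.1 *m Q.1, P.1 *m Q.2 + P.2 *m Q.1).

Definition is_group_inverse (R : realFieldType) (n : nat) (A X : 'M[R]_n) : Prop :=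
  [/\ A *m X *m A = A, X *m A *m X = X & A *m X = X *m A].

Definition is_DGGI (R : realFieldType) (n : nat) (A X : dualmx R n) : Prop :=
  [/\ dmul (dmul A X) A = A, dmul (dmul X A) X = X & dmul A X = dmul X A].

From mathcomp Require Import all_boot all_order all_algebra.
Set Implicit Arguments. Unset Strict Implicit.
Local Open Scope ring_scope.
Import GRing.Theory.

(* A group inverse commutes with everything its matrix commutes with, so for
   commuting A and C the group inverse of AC is A^# C^#, and A^#, C^#, B, D
   can be shuffled freely enough to rearrange the dual part
   -(A^# C^# (A D + B C) A^# C^#) into -(A^# C^# D C^# + A^# B A^# C^#), the
   dual part of both products of the DGGIs. *)

Definition group_inverse (T : pzSemiRingType) (a x : T) : Prop :=
  [/\ a * x * a = a, x * a * x = x & a * x = x * a].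

Section GroupInverse.
Variables (T : pzSemiRingType) (a x : T).
Hypothesis gax : group_inverse a x.

Lemma group_inverse_mulKl : x * x * a = x.
Proof. by case: gax => _ xax ax_xa; rewrite -mulrA -ax_xa mulrA xax. Qed.

Lemma group_inverse_mulKr : a * x * x = x.
Proof. by case: gax => _ xax ax_xa; rewrite ax_xa xax. Qed.

Lemma group_inverse_mulKl' : x * a * a = a.
Proof. by case: gax => axa _ ax_xa; rewrite -ax_xa axa. Qed.

Lemma group_inverse_mulKr' : a * a * x = a.
Proof. by case: gax => axa _ ax_xa; rewrite -mulrA ax_xa mulrA axa. Qed.

Lemma group_inverse_comm b : GRing.comm a b -> GRing.comm x b.
Proof.
rewrite /GRing.comm => ab.
have -> : x * b = x * a * b * x.
  rewrite -{1}group_inverse_mulKl -mulrA ab -{1}group_inverse_mulKr' !mulrA.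
  rewrite -(mulrA (x * x) b) -ab mulrA group_inverse_mulKl.
  by rewrite -(mulrA x b) -ab mulrA.
rewrite -[in RHS]group_inverse_mulKr !mulrA -ab -{2}group_inverse_mulKl'.
rewrite -(mulrA (x * a) a) ab mulrA -(mulrA _ a x) -(mulrA _ (a * x)).
by rewrite group_inverse_mulKr.
Qed.

End GroupInverse.

Lemma group_inverse_uniq (T : pzSemiRingType) (a x y : T) :
  group_inverse a x -> group_inverse a y -> x = y.
Proof.
move=> gx gy; have [aya _ ay_ya] := gy.
transitivity (x * a * y).
  rewrite -{1}(group_inverse_mulKl gx) -{1}aya -(mulrA a y a) -ay_ya !mulrA.
  by rewrite (group_inverse_mulKl gx).
rewrite -[in RHS](group_inverse_mulKr gy) -[a in RHS](group_inverse_mulKl' gx).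
by rewrite -(mulrA (x * a) a y) -(mulrA (x * a) (a * y) y) (group_inverse_mulKr gy).
Qed.

Lemma comm_mulrAC (T : pzSemiRingType) (y z : T) :
  GRing.comm y z -> forall x, x * y * z = x * z * y.
Proof. by move=> yz x; rewrite -!mulrA yz. Qed.

Section CommutingGroupInverses.
Variables (T : pzSemiRingType) (a c x y : T).
Hypotheses (gx : group_inverse a x) (gy : group_inverse c y).
Hypothesis ac : GRing.comm a c.

Let xc : GRing.comm x c := group_inverse_comm gx ac.
Let ya : GRing.comm y a := group_inverse_comm gy (commr_sym ac).

Lemma group_inverses_comm : GRing.comm x y.
Proof. exact/commr_sym/(group_inverse_comm gy)/commr_sym. Qed.

Lemma group_inverseM : group_inverse (a * c) (x * y).
Proof.
have [axa xax ax_xa] := gx; have [cyc ycy cy_yc] := gy.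
have yx := commr_sym group_inverses_comm.
split; rewrite !mulrA.
- rewrite (comm_mulrAC (commr_sym xc)) (comm_mulrAC ya).
  by rewrite (comm_mulrAC (commr_sym ac)) axa -!mulrA (mulrA c y) cyc.
- rewrite (comm_mulrAC ya) (comm_mulrAC (commr_sym xc)) (comm_mulrAC yx) xax.
  by rewrite -!mulrA (mulrA y c) ycy.
- rewrite (comm_mulrAC (commr_sym xc)) ax_xa (comm_mulrAC cy_yc).
  by rewrite (comm_mulrAC (commr_sym ya)).
Qed.

Lemma group_inverseM_sandwich b d : GRing.comm y b -> GRing.comm x d ->
  x * y * (a * d + b * c) * (x * y) = x * (y * d * y) + x * b * x * y.
Proof.
move=> yb xd; have [_ xax _] := gx; have [_ ycy _] := gy.
have yx := commr_sym group_inverses_comm.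
rewrite mulrDr mulrDl !mulrA; congr (_ + _).
  by rewrite (comm_mulrAC ya) (comm_mulrAC (commr_sym xd)) (comm_mulrAC yx) xax.
rewrite (comm_mulrAC yb) (comm_mulrAC (commr_sym xc)) (comm_mulrAC yx).
by rewrite -!mulrA (mulrA y c) ycy !mulrA.
Qed.

End CommutingGroupInverses.

Lemma group_inverse_mx (R : realFieldType) (n : nat) (A X : 'M[R]_n) :
  is_group_inverse A X -> group_inverse A X.
Proof. by rewrite /is_group_inverse mulmxE. Qed.

Theorem mainTheorem6 (R : realFieldType) (n : nat) (A B C D : 'M[R]_n)
    (Ag Cg ACg : 'M[R]_n) :
  is_group_inverse A Ag ->
  is_group_inverse C Cg ->
  is_group_inverse (A *m C) ACg ->
  is_DGGI (dmk A B) (dmk Ag (- (Ag *m B *m Ag))) ->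
  is_DGGI (dmk C D) (dmk Cg (- (Cg *m D *m Cg))) ->
  is_DGGI (dmul (dmk A B) (dmk C D))
          (dmk ACg (- (ACg *m (A *m D + B *m C) *m ACg))) ->
  A *m C = C *m A ->
  Cg *m B = B *m Cg ->
  Ag *m D = D *m Ag ->
  dmk ACg (- (ACg *m (A *m D + B *m C) *m ACg))
    = dmul (dmk Ag (- (Ag *m B *m Ag))) (dmk Cg (- (Cg *m D *m Cg)))
  /\ dmul (dmk Ag (- (Ag *m B *m Ag))) (dmk Cg (- (Cg *m D *m Cg)))
    = dmul (dmk Cg (- (Cg *m D *m Cg))) (dmk Ag (- (Ag *m B *m Ag))).
Proof.
move=> /group_inverse_mx gA /group_inverse_mx gC /group_inverse_mx gAC _ _ _.
rewrite /dmk /dmul /= !mulmxE in gAC * => AC CgB AgD.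
rewrite (group_inverse_uniq gAC (group_inverseM gA gC AC)).
rewrite (group_inverseM_sandwich gA gC AC CgB AgD) !mulrN !mulNr opprD.
have AgCg : GRing.comm Ag Cg := group_inverses_comm gA gC AC.
have Ag_CgDCg : GRing.comm Ag (Cg * D * Cg) := commrM (commrM AgCg AgD) AgCg.
have Cg_AgBAg : GRing.comm Cg (Ag * B * Ag) :=
  commrM (commrM (commr_sym AgCg) CgB) (commr_sym AgCg).
by rewrite AgCg Ag_CgDCg Cg_AgBAg addrC.
Qed.
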